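(* Let $\kappa$ be a regular uncountable cardinal and $I$ an ideal on $\kappa$ which is a p-point. Then $I$ is prepleasant if and only if $I$ is pleasant.
   Context: An ideal on $\kappa$ is a family of subsets of $\kappa$ closed under subsets and finite unions, which is $<\kappa$-complete and contains all singletons; $I_\kappa=\{X\subseteq\kappa:|X|<\kappa\}$. $I^*=\{\kappa\setminus X: X\in I\}$. For an ideal $J$, a function $f$ with domain $\subseteq\kappa$ is $J$-small if $f^{-1}(\{\xi\})\in J$ for every $\xi<\kappa$. $I$ is a p-point if for every $I$-small $f:\kappa\to\kappa$ there is $X\in I^*$ with $f\restriction X$ being $I_\kappa$-small. For $A\subseteq\kappa$ and $X_\alpha\subseteq\kappa$, $\bigtriangledown_{\alpha\in A}X_\alpha=\{\xi<\kappa:\exists\alpha<\xi\,(\alpha\in A\wedge \xi\in X_\alpha)\}$. $I$ is pleasant if whenever $A\in I$ and $X_\alpha\in I$ for all $\alpha$, then $\bigtriangledown_{\alpha\in A}X_\alpha\in I$. $I$ is prepleasant if for every $Q\in I$ and every sequence $\langle B_\alpha\rangle_{\alpha<\kappa}$ of bounded subsets of $\kappa$, $\bigtriangledown_{\alpha\in Q}B_\alpha\in I$. *)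

(* the cardinal kappa is modelled as a type K equipped with a
   strict well-order lt (i.e. the ordinal kappa = {alpha | alpha < kappa});
   subsets of kappa are predicates K -> Prop. *)
From Stdlib Require Import Classical.

Set Implicit Arguments.

Section Kappa.
Variables (K : Type) (lt : K -> K -> Prop).

Definition strict_wellorder : Prop :=
  well_founded lt /\
  (forall x y z, lt x y -> lt y z -> lt x z) /\
  (forall x y, lt x y \/ x = y \/ lt y x).

(* |X| < kappa  (X a subset of kappa): there is no injection of kappa into X *)
Definition small (X : K -> Prop) : Prop :=
  ~ exists f : K -> K, (forall a b, f a = f b -> a = b) /\ (forall a, X (f a)).

Definition bounded (X : K -> Prop) : Prop :=
  exists b, forall x, X x -> lt x b.

(* the order type of (K, lt) is a cardinal: every proper initial segment
   has cardinality < kappa *)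
Definition is_cardinal : Prop :=
  forall a, small (fun x => lt x a).

Definition regular : Prop :=
  forall X, small X -> bounded X.

Definition uncountable : Prop :=
  ~ exists f : K -> nat, forall a b, f a = f b -> a = b.

Definition ideal (I : (K -> Prop) -> Prop) : Prop :=
  (forall X Y, I Y -> (forall x, X x -> Y x) -> I X) /\
  (forall X Y, I X -> I Y -> I (fun x => X x \/ Y x)) /\
  (* <kappa-completeness: unions of fewer than kappa members of I are in I *)
  (forall (A : K -> Prop) (F : K -> K -> Prop),
      small A -> (forall a, A a -> I (F a)) ->
      I (fun x => exists a, A a /\ F a x)) /\
  (forall a, I (fun x => x = a)).

Definition I_kappa (X : K -> Prop) : Prop := small X.

Definition small_fun (J : (K -> Prop) -> Prop) (D : K -> Prop) (f : K -> K)
  : Prop := forall xi, J (fun x => D x /\ f x = xi).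

Definition in_dual (I : (K -> Prop) -> Prop) (X : K -> Prop) : Prop :=
  exists Y, I Y /\ forall x, X x <-> ~ Y x.

Definition p_point (I : (K -> Prop) -> Prop) : Prop :=
  forall f : K -> K, small_fun I (fun _ => True) f ->
    exists X, in_dual I X /\ small_fun I_kappa X f.

Definition diag_union (A : K -> Prop) (X : K -> K -> Prop) : K -> Prop :=
  fun xi => exists alpha, lt alpha xi /\ A alpha /\ X alpha xi.

Definition pleasant (I : (K -> Prop) -> Prop) : Prop :=
  forall (A : K -> Prop) (X : K -> K -> Prop),
    I A -> (forall alpha, I (X alpha)) -> I (diag_union A X).

Definition prepleasant (I : (K -> Prop) -> Prop) : Prop :=
  forall (Q : K -> Prop) (B : K -> K -> Prop),
    I Q -> (forall alpha, bounded (B alpha)) -> I (diag_union Q B).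

End Kappa.

(* Bounded sets lie in every ideal (they have size < kappa), so pleasantness
   gives prepleasantness outright.  Conversely, let Y be the diagonal union of
   members X_a of I over A in I, and pick for each xi in Y an index f(xi) < xi
   with f(xi) in A and xi in X_{f(xi)}.  The fibre of f over a lies in X_a plus
   one point, so f is I-small; the p-point property yields W in I off which all
   fibres of f have size < kappa, hence are bounded by regularity.  Then Y is
   covered by W and the diagonal union over A of these bounded fibres, which
   is in I by prepleasantness. *)
From Stdlib Require Import Classical ClassicalEpsilon.

Section PleasantIdeals.

Variables (K : Type) (lt : K -> K -> Prop) (I : (K -> Prop) -> Prop).
Hypothesis HI : ideal I.

Lemma ideal_subset (X Y : K -> Prop) : I Y -> (forall x, X x -> Y x) -> I X.
Proof. destruct HI as [Hsub _]; exact (Hsub X Y). Qed.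

Lemma ideal_union (X Y : K -> Prop) : I X -> I Y -> I (fun x => X x \/ Y x).
Proof. destruct HI as [_ [Hun _]]; exact (Hun X Y). Qed.

Lemma bounded_in_ideal (X : K -> Prop) :
  is_cardinal lt -> bounded lt X -> I X.
Proof.
  intros Hcard [b Hb]. destruct HI as [_ [_ [Hcomp Hsing]]].
  apply ideal_subset with (fun x => exists a, lt a b /\ x = a).
  - exact (Hcomp (fun x => lt x b) (fun a x => x = a) (Hcard b) (fun a _ => Hsing a)).
  - intros x Hx. exists x. auto.
Qed.

Lemma pleasant_prepleasant :
  is_cardinal lt -> pleasant lt I -> prepleasant lt I.
Proof.
  intros Hcard Hpl Q B HQ HB. apply Hpl; auto.
  intros a. apply bounded_in_ideal; auto.
Qed.

Lemma diag_union_selector (A : K -> Prop) (X : K -> K -> Prop) :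
  exists f : K -> K,
    (forall xi, diag_union lt A X xi -> lt (f xi) xi /\ A (f xi) /\ X (f xi) xi)
    /\ (forall xi, ~ diag_union lt A X xi -> f xi = xi).
Proof.
  set (Y := diag_union lt A X).
  destruct (choice (fun xi a => (Y xi -> lt a xi /\ A a /\ X a xi)
                                 /\ (~ Y xi -> a = xi))) as [f Hf].
  - intros xi. destruct (classic (Y xi)) as [Hy|Hy].
    + pose proof Hy as [a Ha]. exists a. split; [auto | contradiction].
    + exists xi. split; [contradiction | auto].
  - exists f. split; intros xi; apply Hf.
Qed.

Lemma diag_selector_small (A : K -> Prop) (X : K -> K -> Prop) (f : K -> K) :
  (forall alpha, I (X alpha)) ->
  (forall xi, diag_union lt A X xi -> X (f xi) xi) ->
  (forall xi, ~ diag_union lt A X xi -> f xi = xi) ->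
  small_fun I (fun _ => True) f.
Proof.
  intros HX Hin Hout a.
  apply ideal_subset with (fun x => X a x \/ x = a).
  - apply ideal_union; auto. destruct HI as [_ [_ [_ Hsing]]]. apply Hsing.
  - intros x [_ Hfx]. subst a. destruct (classic (diag_union lt A X x)) as [Hy|Hy].
    + left. auto.
    + right. symmetry. auto.
Qed.

Lemma prepleasant_pleasant :
  regular lt -> p_point I -> prepleasant lt I -> pleasant lt I.
Proof.
  intros Hreg Hp Hpre A X HA HX.
  destruct (diag_union_selector A X) as [f [Hin Hout]].
  assert (Hf : small_fun I (fun _ => True) f).
  { apply diag_selector_small with A X; auto. intros xi Hy. apply Hin, Hy. }
  destruct (Hp f Hf) as [Z [[W [HW HZW]] HZ]].
  assert (Hfibres : I (diag_union lt A (fun a x => Z x /\ f x = a))).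
  { apply Hpre; auto. intros a. apply Hreg, HZ. }
  apply ideal_subset with (fun xi => W xi \/ diag_union lt A (fun a x => Z x /\ f x = a) xi).
  - apply ideal_union; auto.
  - intros xi Hy. destruct (classic (W xi)) as [Hw|Hw]; [left; auto | right].
    destruct (Hin xi Hy) as [Hlt [HAf _]].
    exists (f xi). repeat split; auto. apply HZW, Hw.
Qed.

End PleasantIdeals.

Theorem theorem3p2 (K : Type) (lt : K -> K -> Prop)
  (Hwo : strict_wellorder lt) (Hcard : is_cardinal lt) (Hreg : regular lt)
  (Hunc : uncountable K) (I : (K -> Prop) -> Prop)
  (HI : ideal I) (Hp : p_point I) :
  prepleasant lt I <-> pleasant lt I.
Proof.
  split.
  - exact (@prepleasant_pleasant K lt I HI Hreg Hp).
  - exact (@pleasant_prepleasant K lt I HI Hcard).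
Qed.
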